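(* Let $1\le k\le n-1$. The complex $\Delta^{NC}_{k,n}$ has the following properties. (i) The map $i\mapsto n+1-i$ on $[n]$ induces (by acting on $k$-subsets) an automorphism of $\Delta^{NC}_{k,n}$. (ii) The map $I\mapsto [n]\setminus I$ (viewing vectors as subsets) induces an isomorphism $\Delta^{NC}_{k,n}\to\Delta^{NC}_{n-k,n}$; i.e. $I,J\in V_{k,n}$ are noncrossing iff $[n]\setminus I$, $[n]\setminus J\in V_{n-k,n}$ are noncrossing. (iii) For $I\ne J\in V_{k,n}$, let $S=I\triangle J$, $m=|I\setminus J|=|J\setminus I|$, and relabel $S$ order-preservingly as $[2m]$; then $I\setminus J$ and $J\setminus I$ become elements of $V_{m,2m}$, and $I,J$ are noncrossing in $V_{k,n}$ iff these two elements of $V_{m,2m}$ are noncrossing. (iv) For $b\in[n]$, the restriction of $\Delta^{NC}_{k,n}$ to the vertices $I$ with $b\in I$ is isomorphic to $\Delta^{NC}_{k-1,n-1}$, and the restriction to vertices with $b\notin I$ is isomorphic to $\Delta^{NC}_{k,n-1}$ (via deleting $b$ and relabeling $[n]\setminus\{b\}$ order-preservingly as $[n-1]$). (v) For each $c\in[n]$, the vector obtained by sorting the cyclic interval $\{c,c+1,\dots,c+k-1\}$ (entries taken modulo $n$ in $\{1,\dots,n\}$) is noncrossing with every element of $V_{k,n}$; hence these $n$ vectors belong to every maximal face of $\Delta^{NC}_{k,n}$.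
   Context: $[n]=\{1,\dots,n\}$. $V_{k,n}$ denotes the set of integer vectors $I=(i_1,\dots,i_k)$ with $1\le i_1<\dots<i_k\le n$, identified with $k$-subsets of $[n]$. Two arcs $(p<p')$ and $(q<q')$ cross if $p<q<p'<q'$ or $q<p<q'<p'$. Two vectors $I=(i_1,\dots,i_k)$, $J=(j_1,\dots,j_k)\in V_{k,n}$ are noncrossing if for all indices $1\le a<b\le k$ such that $i_\ell=j_\ell$ for all $a<\ell<b$, the arcs $(i_a<i_b)$ and $(j_a<j_b)$ do not cross. The noncrossing complex $\Delta^{NC}_{k,n}$ is the flag simplicial complex with vertex set $V_{k,n}$ whose faces are the sets of pairwise noncrossing vectors. *)

(* Vectors I = (i_1 < ... < i_k) with entries in [n] = {1..n}
   are represented as strictly increasing sequences of naturals. *)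
From mathcomp Require Import all_boot.
Set Implicit Arguments. Unset Strict Implicit. Unset Printing Implicit Defensive.

Definition Vkn (k n : nat) (I : seq nat) : bool :=
  [&& size I == k, sorted ltn I & all (fun i => 0 < i <= n) I].

Definition arcs_cross (p p' q q' : nat) : bool :=
  ((p < q) && (q < p') && (p' < q')) || ((q < p) && (p < q') && (q' < p')).

(* I, J noncrossing (indices 0-based: entry a of I is nth 0 I a) *)
Definition noncrossing (I J : seq nat) : bool :=
  [forall a : 'I_(size I), forall b : 'I_(size I),
     ((a < b) && [forall l : 'I_(size I),
                    ((a < l) && (l < b)) ==> (nth 0 I l == nth 0 J l)])
     ==> ~~ arcs_cross (nth 0 I a) (nth 0 I b) (nth 0 J a) (nth 0 J b)].

(* faces of the flag complex Delta^NC_{k,n}: finite sets (given as lists)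
   of pairwise noncrossing vectors of V_{k,n} *)
Definition is_face (k n : nat) (F : seq (seq nat)) : bool :=
  all (Vkn k n) F && all (fun I => all (noncrossing I) F) F.

Definition is_max_face (k n : nat) (F : seq (seq nat)) : Prop :=
  is_face k n F /\
  forall G, is_face k n G -> {subset F <= G} -> {subset G <= F}.

Definition complex_iso (V1 : pred (seq nat)) (face1 : seq (seq nat) -> bool)
    (V2 : pred (seq nat)) (face2 : seq (seq nat) -> bool)
    (f : seq nat -> seq nat) : Prop :=
  [/\ forall I, V1 I -> V2 (f I),
      forall I J, V1 I -> V1 J -> f I = f J -> I = J,
      forall J, V2 J -> exists2 I, V1 I & f I = J
    & forall F, all V1 F -> face1 F = face2 (map f F)].

Definition reflect_vec (n : nat) (I : seq nat) : seq nat :=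
  rev (map (fun i => n.+1 - i) I).

Definition compl_vec (n : nat) (I : seq nat) : seq nat :=
  [seq i <- iota 1 n | i \notin I].

Definition setminus_vec (I J : seq nat) : seq nat := [seq i <- I | i \notin J].
Definition symdiff_vec (I J : seq nat) : seq nat :=
  sort leq (setminus_vec I J ++ setminus_vec J I).
Definition relabel (S : seq nat) (X : seq nat) : seq nat :=
  map (fun x => (index x S).+1) X.

Definition delete_vec (b : nat) (I : seq nat) : seq nat :=
  map (fun x => if x < b then x else x.-1) [seq x <- I | x != b].

Definition cyc_vec (k n c : nat) : seq nat :=
  sort leq [seq ((c + i).-1 %% n).+1 | i <- iota 0 k].

From mathcomp Require Import all_boot.
From mathcomp Require Import zify.
Set Implicit Arguments. Unset Strict Implicit. Unset Printing Implicit Defensive.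

(* Two increasing sequences I, J of the same length cross exactly when there
   are y in J \ I and z in I \ J with y < z such that I and J agree strictly
   between y and z and I has one more entry than J below y.  This criterion
   involves only membership, order and counting, so it is preserved by
   order-preserving relabellings and by discarding the common entries of I and
   J, which gives (iii) and (iv); complementation in [n] preserves it while
   exchanging I and J, which gives (ii); and order reversal preserves it once
   "one more entry below y" is rewritten as "one fewer entry above z", which
   gives (i).  An interval crosses nothing, because the counting condition
   leaves no room for the extra entry, and a cyclic interval that wraps around
   is the complement of an interval; this gives (v). *)

Lemma count_uniq_eq (P : pred nat) (I J : seq nat) : uniq I -> uniq J ->
  {in P, I =i J} -> count P I = count P J.
Proof.
move=> uI uJ IJ; rewrite -!size_filter; apply/perm_size/uniq_perm;
  rewrite ?filter_uniq // => x; rewrite !mem_filter.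
by case Px: (P x); rewrite //= IJ.
Qed.

Lemma count_filterC (P a : pred nat) (s : seq nat) :
  count P s = count P [seq x <- s | a x] + count P [seq x <- s | ~~ a x].
Proof. by elim: s => //= x s ->; case: (a x) => /=; lia. Qed.

Lemma count_lt_split (y x : nat) (s : seq nat) : y < x ->
  count (fun t => t < x) s =
    count (fun t => t < y) s + count (pred1 y) s + count (fun t => y < t < x) s.
Proof. by move=> yx; elim: s => //= a s ->; rewrite /=; lia. Qed.

Lemma count_lt_iota (m p y : nat) :
  count (fun t => t < y) (iota m p) = minn (y - m) p.
Proof. by elim: p m => [|p IH] m /=; [lia | rewrite IH; lia]. Qed.

Section SortedNth.
Variable s : seq nat.
Hypothesis s_sorted : sorted ltn s.

Lemma sorted_nth_mono : {in [pred i | i < size s] &, {mono nth 0 s : i j / i < j}}.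
Proof. exact/leqW_mono_in/leq_mono_in/(sorted_ltn_nth ltn_trans). Qed.

Lemma nth_lt_count (x i : nat) : i < size s ->
  (nth 0 s i < x) = (i < count (fun t => t < x) s).
Proof.
elim: s s_sorted i => [|a r IH] //= sorted_ar i lt_i_r.
have lt_a_r : all (ltn a) r := order_path_min ltn_trans sorted_ar.
have count0 : x <= a -> count (fun t => t < x) r = 0.
  move=> x_le_a; apply/eqP; rewrite -leqn0 leqNgt -has_count.
  by apply/hasP => -[t /(allP lt_a_r) /=]; lia.
case: i lt_i_r => [|i] lt_i_r /=; first by case: (ltnP a x) => // /count0 ->.
rewrite (IH (path_sorted sorted_ar)) //.
by case: (ltnP a x) => [|/count0 ->] //; rewrite add1n ltnS.
Qed.

Lemma count_lt_nth (i : nat) : i < size s -> count (fun t => t < nth 0 s i) s = i.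
Proof.
move=> lt_i_s; set c := count _ s.
have := nth_lt_count (nth 0 s i) lt_i_s; rewrite ltnn -/c => /esym/negbT.
rewrite -leqNgt => le_c_i; apply/eqP; rewrite eqn_leq le_c_i leqNgt.
apply/negP => lt_c_i; have lt_c_s : c < size s by apply: leq_trans lt_i_s.
by have := nth_lt_count (nth 0 s i) lt_c_s; rewrite ltnn sorted_nth_mono ?lt_c_i.
Qed.

Lemma nth_count_lt_mem (x : nat) : x \in s -> nth 0 s (count (fun t => t < x) s) = x.
Proof. by move=> /(nthP 0) [i lt_i_s <-]; rewrite count_lt_nth. Qed.

End SortedNth.

Lemma count_lt_mem (s : seq nat) (x : nat) :
  x \in s -> count (fun t => t < x) s < size s.
Proof.
move=> xs; rewrite -(count_predC (fun t => t < x)) -addn1 leq_add2l.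
by rewrite -has_count; apply/hasP; exists x => //=; rewrite ltnn.
Qed.

(** * A crossing criterion *)

(* The arcs (i_a < i_b) and (j_a < j_b) crossing as i_a < j_a < i_b < j_b,
   described through their middle endpoints y = j_a and z = i_b. *)
Definition crossing_at (I J : seq nat) (y z : nat) : Prop :=
  [/\ [&& y \in J, y \notin I, z \in I, z \notin J & y < z],
      forall t, y < t < z -> (t \in I) = (t \in J)
    & count (fun t => t < y) I = (count (fun t => t < y) J).+1].

Definition crosses (I J : seq nat) : Prop := exists y z, crossing_at I J y z.

Definition crossing_indices (I J : seq nat) (a b : nat) : Prop :=
  [/\ a < b, b < size I, forall l, a < l < b -> nth 0 I l = nth 0 J l
    & [&& nth 0 I a < nth 0 J a, nth 0 J a < nth 0 I b & nth 0 I b < nth 0 J b]].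

Lemma noncrossing_indicesP (I J : seq nat) : size I = size J ->
  reflect (~ (exists a b, crossing_indices I J a b) /\
           ~ (exists a b, crossing_indices J I a b))
          (noncrossing I J).
Proof.
move=> eq_size; apply: (iffP forallP) => [nc | [ncIJ ncJI] a].
  have arc_ok a b : a < b -> b < size I ->
      (forall l, a < l < b -> nth 0 I l = nth 0 J l) ->
      ~~ arcs_cross (nth 0 I a) (nth 0 I b) (nth 0 J a) (nth 0 J b).
    move=> ab bI mid; have aI : a < size I by apply: ltn_trans bI.
    move/forallP/(_ (Ordinal bI))/implyP: (nc (Ordinal aI)); apply.
    by rewrite ab; apply/forallP => l; apply/implyP => /mid ->.
  split=> -[a [b [ab bI mid /and3P[c1 c2 c3]]]]; last rewrite -eq_size in bI.
    by move/negP: (arc_ok a b ab bI mid); rewrite /arcs_cross c1 c2 c3.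
  have mid' l : a < l < b -> nth 0 I l = nth 0 J l by move/mid.
  by move/negP: (arc_ok a b ab bI mid'); rewrite /arcs_cross c1 c2 c3 orbT.
apply/forallP => b; apply/implyP => /andP[ab /forallP mid].
have {}mid l : a < l < b -> nth 0 I l = nth 0 J l.
  move=> /[dup] /andP[_ lb] alb; have lI : l < size I by apply: ltn_trans (ltn_ord b).
  by move/implyP/(_ alb)/eqP: (mid (Ordinal lI)).
apply/negP; rewrite /arcs_cross => /orP[] /andP[/andP[c1 c2] c3].
  by apply: ncIJ; exists a, b; split; rewrite ?c1 ?c2 ?c3.
apply: ncJI; exists a, b; split; rewrite -?eq_size ?c1 ?c2 ?c3 //.
by move=> l /mid.
Qed.

Lemma crosses_of_indices (I J : seq nat) (a b : nat) :
  sorted ltn I -> sorted ltn J -> size I = size J ->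
  crossing_indices I J a b -> crossing_at I J (nth 0 J a) (nth 0 I b).
Proof.
move=> sI sJ eq_size [ab bI mid /and3P[IaJa JaIb IbJb]].
have aI : a < size I by apply: ltn_trans bI.
have [aJ bJ] : a < size J /\ b < size J by rewrite -eq_size.
have monoI := sorted_nth_mono sI; have monoJ := sorted_nth_mono sJ.
have inner_I l : l < size I -> nth 0 J a <= nth 0 I l < nth 0 I b ->
    [/\ a < l, l < b & l < size J].
  move=> lI ?; have := monoI a l aI lI; have := monoI l b lI bI.
  by rewrite -eq_size; split; lia.
have inner_J l : l < size J -> nth 0 J a < nth 0 J l <= nth 0 I b ->
    [/\ a < l, l < b & l < size I].
  move=> lJ ?; have := monoJ a l aJ lJ; have := monoJ l b lJ bJ.
  by rewrite eq_size; split; lia.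
split.
- rewrite !mem_nth //= JaIb andbT; apply/andP; split.
    apply/(nthP 0) => -[l lI Il].
    case: (inner_I l lI) => [|al lb lJ]; first by rewrite Il leqnn.
    by have := monoJ a l aJ lJ; rewrite al -(mid l) ?al // Il ltnn.
  apply/(nthP 0) => -[l lJ Jl].
  case: (inner_J l lJ) => [|al lb lI]; first by rewrite Jl JaIb leqnn.
  by have := monoI l b lI bI; rewrite lb (mid l) ?al // Jl ltnn.
- move=> t /andP[Jat tIb]; apply/(nthP 0)/(nthP 0) => -[l ls lt].
    case: (inner_I l ls) => [|al lb lJ]; first by rewrite lt (ltnW Jat).
    by exists l; rewrite // -(mid l) ?al.
  case: (inner_J l ls) => [|al lb lI]; first by rewrite lt Jat (ltnW tIb).
  by exists l; rewrite // (mid l) ?al.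
- rewrite count_lt_nth //; set c := count _ I.
  have lt_a_c : a < c by rewrite -(nth_lt_count sI).
  suff : ~~ (a.+1 < c) by lia.
  have a1I : a.+1 < size I by lia.
  rewrite -(nth_lt_count sI) // -leqNgt.
  case: (ltnP a.+1 b) => [a1b | ba1].
    by rewrite mid ?ltnSn ?a1b // ltnW // monoJ // -eq_size.
  have -> : a.+1 = b by lia.
  exact: ltnW.
Qed.

Lemma indices_of_crosses (I J : seq nat) (y z : nat) :
  sorted ltn I -> sorted ltn J -> size I = size J -> crossing_at I J y z ->
  crossing_indices I J (count (fun t => t < y) J) (count (fun t => t < z) I).
Proof.
move=> sI sJ eq_size [/and5P[yJ yI zI zJ yz] between count_y].
have uI := sorted_uniq ltn_trans ltnn sI; have uJ := sorted_uniq ltn_trans ltnn sJ.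
set a := count _ J in count_y *; set b := count _ I.
have Ja : nth 0 J a = y by apply: nth_count_lt_mem.
have Ib : nth 0 I b = z by apply: nth_count_lt_mem.
have bI : b < size I by apply: count_lt_mem.
have bJ : b < size J by rewrite -eq_size.
have ab : a < b by rewrite -ltnS -count_y; apply: sub_count => t /=; lia.
have count_eq x : y < x -> x <= z ->
    count (fun t => t < x) I = count (fun t => t < x) J.
  move=> yx xz; rewrite (count_lt_split _ yx) (count_lt_split J yx).
  rewrite !count_uniq_mem // (negbTE yI) yJ count_y -/a.
  rewrite (@count_uniq_eq _ I J uI uJ); first lia.
  by move=> t /andP[yt tx]; apply: between; rewrite yt (leq_trans tx).
split => //.
- move=> l /andP[al lb]; have lI : l < size I by lia.
  have xI : nth 0 I l \in I by apply: mem_nth.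
  have yx : y < nth 0 I l.
    rewrite ltn_neqAle; apply/andP; split; first by apply: contraNneq yI => ->.
    by rewrite leqNgt (nth_lt_count sI) // count_y ltnS -ltnNge.
  have xz : nth 0 I l < z by rewrite -Ib sorted_nth_mono.
  have xJ : nth 0 I l \in J by rewrite -between ?yx.
  by rewrite -{1}(nth_count_lt_mem sJ xJ) -count_eq ?(ltnW xz) // count_lt_nth.
- rewrite Ja Ib yz (nth_lt_count sI) ?count_y ?ltnSn /=; last by lia.
  rewrite ltn_neqAle leqNgt (nth_lt_count sJ) // -count_eq // ltnn andbT.
  by apply: contraNneq zJ => ->; apply: mem_nth.
Qed.

Lemma crosses_indicesP (I J : seq nat) :
  sorted ltn I -> sorted ltn J -> size I = size J ->
  crosses I J <-> exists a b, crossing_indices I J a b.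
Proof.
move=> sI sJ eq_size; split=> [[y [z cross]] | [a [b cross]]].
  by do 2 eexists; apply: indices_of_crosses cross.
by do 2 eexists; apply: crosses_of_indices cross.
Qed.

Lemma noncrossingP (I J : seq nat) :
  sorted ltn I -> sorted ltn J -> size I = size J ->
  reflect (~ (crosses I J \/ crosses J I)) (noncrossing I J).
Proof.
move=> sI sJ eq_size; apply: (iffP (noncrossing_indicesP eq_size)).
  by rewrite !crosses_indicesP //; tauto.
by rewrite !crosses_indicesP //; tauto.
Qed.

Lemma eq_noncrossing (I J I' J' : seq nat) :
  sorted ltn I -> sorted ltn J -> size I = size J ->
  sorted ltn I' -> sorted ltn J' -> size I' = size J' ->
  (crosses I J \/ crosses J I <-> crosses I' J' \/ crosses J' I') ->
  noncrossing I J = noncrossing I' J'.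
Proof.
move=> sI sJ eIJ sI' sJ' eIJ' equiv.
by apply/(noncrossingP sI sJ eIJ)/(noncrossingP sI' sJ' eIJ'); rewrite equiv.
Qed.

Lemma crosses_eq (I J I' J' : seq nat) :
  (forall y z, crossing_at I J y z <-> crossing_at I' J' y z) ->
  crosses I J <-> crosses I' J'.
Proof. by move=> eq_at; split=> -[y [z /eq_at cross]]; exists y, z. Qed.

Lemma crossing_at_rev (I J : seq nat) (y z : nat) :
  crossing_at (rev I) (rev J) y z <-> crossing_at I J y z.
Proof.
rewrite /crossing_at !mem_rev !count_rev.
by split=> -[? between ?]; split=> // t /between; rewrite ?mem_rev.
Qed.

Lemma crossing_at_filter (q : pred nat) (I J : seq nat) (y z : nat) :
  uniq I -> uniq J -> (forall x, ~~ q x -> (x \in I) = (x \in J)) ->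
  crossing_at [seq x <- I | q x] [seq x <- J | q x] y z <-> crossing_at I J y z.
Proof.
move=> uI uJ agree_out; rewrite /crossing_at !mem_filter.
have count_out : count (fun t => t < y) [seq x <- I | ~~ q x] =
                 count (fun t => t < y) [seq x <- J | ~~ q x].
  apply: count_uniq_eq; rewrite ?filter_uniq // => x _; rewrite !mem_filter.
  by case qx: (q x); rewrite //= agree_out ?qx.
rewrite [count _ I](count_filterC _ q) [count _ J](count_filterC _ q) count_out.
have qIJ x : (x \in I) != (x \in J) -> q x.
  by apply: contraR => /agree_out ->; rewrite eqxx.
split=> [[/and5P[/andP[qy yJ] yI /andP[qz zI] zJ yz] between count_y] |
         [/and5P[yJ yI zI zJ yz] between count_y]].
  rewrite qy qz /= in yI zJ; split; [by rewrite yJ yI zI zJ | | lia].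
  move=> t tyz; case qt: (q t); last by apply: agree_out; rewrite qt.
  by have := between t tyz; rewrite !mem_filter qt.
have qy : q y by apply: qIJ; rewrite yJ (negbTE yI).
have qz : q z by apply: qIJ; rewrite zI (negbTE zJ).
split; [by rewrite qy qz yJ yI zI zJ | | lia].
by move=> t tyz; rewrite !mem_filter between.
Qed.

Lemma count_size_split (y z : nat) (s : seq nat) : y < z ->
  size s = count (fun t => t < y) s + count (pred1 y) s +
           count (fun t => y < t < z) s + count (pred1 z) s + count (fun t => z < t) s.
Proof. by move=> yz; elim: s => //= x s ->; rewrite /=; lia. Qed.

Lemma count_below_above (I J : seq nat) (y z : nat) :
  uniq I -> uniq J -> size I = size J ->
  y \in J -> y \notin I -> z \in I -> z \notin J -> y < z ->
  (forall t, y < t < z -> (t \in I) = (t \in J)) ->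
  count (fun t => t < y) I + count (fun t => z < t) I =
  count (fun t => t < y) J + count (fun t => z < t) J.
Proof.
move=> uI uJ eq_size yJ yI zI zJ yz between.
have := count_size_split I yz; have := count_size_split J yz.
rewrite !count_uniq_mem // (negbTE yI) (negbTE zJ) yJ zI eq_size.
by rewrite (@count_uniq_eq _ I J uI uJ between); lia.
Qed.

Section OrderMaps.
Variables (D : pred nat) (f : nat -> nat).

Lemma mem_map_in (s : seq nat) (x : nat) : {in D &, injective f} ->
  x \in D -> {subset s <= D} -> (f x \in map f s) = (x \in s).
Proof.
move=> f_inj Dx Ds; apply/mapP/idP => [[u us /f_inj ->] // | xs]; last by exists x.
exact: Ds.
Qed.

Lemma crosses_map (I J : seq nat) : {in D &, {homo f : x y / x < y}} ->
  {subset I <= D} -> {subset J <= D} ->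
  crosses (map f I) (map f J) <-> crosses I J.
Proof.
move=> f_incr DI DJ; have f_mono := leqW_mono_in (leq_mono_in f_incr).
have memf x s : x \in D -> {subset s <= D} -> (f x \in map f s) = (x \in s).
  exact/mem_map_in/(mono_inj_in leqnn anti_leq (leq_mono_in f_incr)).
have countf y s : y \in D -> {subset s <= D} ->
    count (fun t => t < f y) (map f s) = count (fun t => t < y) s.
  by move=> Dy Ds; rewrite count_map; apply: eq_in_count => u /Ds Du /=; apply: f_mono.
split=> [[_ [_ [/and5P[/mapP[y yJ ->] yI /mapP[z zI ->] zJ yz] between count_y]]] |
         [y [z [/and5P[yJ yI zI zJ yz] between count_y]]]].
  have [Dy Dz] := (DJ y yJ, DI z zI).
  rewrite !memf // in yI zJ; rewrite f_mono // in yz; rewrite !countf // in count_y.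
  exists y, z; split; rewrite ?yJ ?yI ?zI ?zJ // => t /andP[yt tz].
  case: (boolP ((t \in I) || (t \in J))) => [tIJ | /norP[/negbTE-> /negbTE->] //].
  have Dt : t \in D by case/orP: tIJ => [/DI | /DJ].
  by have := between (f t); rewrite !memf // !f_mono // yt tz => ->.
have [Dy Dz] := (DJ y yJ, DI z zI).
exists (f y), (f z); split; rewrite ?memf ?f_mono ?countf ?yJ ?yI ?zI ?zJ //.
move=> t /andP[yt tz]; apply/mapP/mapP => -[u us tu]; subst t; exists u => //.
  have Du := DI u us; rewrite !f_mono // in yt tz.
  by rewrite -between ?yt.
have Du := DJ u us; rewrite !f_mono // in yt tz.
by rewrite between ?yt.
Qed.

Lemma crosses_map_anti (I J : seq nat) : {in D &, {homo f : x y /~ x < y}} ->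
  uniq I -> uniq J -> size I = size J -> {subset I <= D} -> {subset J <= D} ->
  crosses (map f I) (map f J) <-> crosses J I.
Proof.
move=> f_decr uI uJ eq_size DI DJ; have f_mono := leqW_nmono_in (leq_nmono_in f_decr).
have memf x s : x \in D -> {subset s <= D} -> (f x \in map f s) = (x \in s).
  apply: mem_map_in => u v Du Dv fuv.
  by case: (ltngtP u v) => // [uv | vu];
    [move: (f_decr v u Dv Du uv) | move: (f_decr u v Du Dv vu)]; rewrite fuv ltnn.
have countf y s : y \in D -> {subset s <= D} ->
    count (fun t => t < f y) (map f s) = count (fun t => y < t) s.
  by move=> Dy Ds; rewrite count_map; apply: eq_in_count => u /Ds Du /=; apply: f_mono.
split=> [[_ [_ [/and5P[/mapP[y yJ ->] yI /mapP[z zI ->] zJ zy] between count_y]]] |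
         [z [y [/and5P[zI zJ yJ yI zy] between count_z]]]].
  have [Dy Dz] := (DJ y yJ, DI z zI).
  rewrite !memf // in yI zJ; rewrite f_mono // in zy; rewrite !countf // in count_y.
  have agree t : z < t < y -> (t \in J) = (t \in I).
    move=> /andP[zt ty].
    case: (boolP ((t \in I) || (t \in J))) => [tIJ | /norP[/negbTE-> /negbTE->] //].
    have Dt : t \in D by case/orP: tIJ => [/DI | /DJ].
    by have := between (f t); rewrite !memf // !f_mono // zt ty => ->.
  exists z, y; split; rewrite ?yJ ?yI ?zI ?zJ //.
  have := count_below_above uJ uI (esym eq_size) zI zJ yJ yI zy agree; lia.
have [Dy Dz] := (DJ y yJ, DI z zI).
have := count_below_above uJ uI (esym eq_size) zI zJ yJ yI zy between => counts.
exists (f y), (f z); split; rewrite ?memf ?f_mono ?countf ?yJ ?yI ?zI ?zJ //; last by lia.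
move=> t /andP[yt tz]; apply/mapP/mapP => -[u us tu]; subst t; exists u => //.
  have Du := DI u us; rewrite !f_mono // in yt tz.
  by rewrite between ?tz ?yt.
have Du := DJ u us; rewrite !f_mono // in yt tz.
by rewrite -between ?tz ?yt.
Qed.
End OrderMaps.

(** * Reflection and complement *)

Lemma VknP (k n : nat) (I : seq nat) :
  reflect [/\ size I = k, sorted ltn I & all (fun i => 0 < i <= n) I] (Vkn k n I).
Proof. by apply: (iffP and3P) => -[/eqP ? ? ?]; split=> //; apply/eqP. Qed.

Lemma Vkn_uniq (k n : nat) (I : seq nat) : Vkn k n I -> uniq I.
Proof. by case/VknP => _ /(sorted_uniq ltn_trans ltnn). Qed.

Lemma noncrossing_Vkn (k n k' n' : nat) (I J I' J' : seq nat) :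
  Vkn k n I -> Vkn k n J -> Vkn k' n' I' -> Vkn k' n' J' ->
  (crosses I J \/ crosses J I <-> crosses I' J' \/ crosses J' I') ->
  noncrossing I J = noncrossing I' J'.
Proof.
move=> /VknP[sI ? _] /VknP[sJ ? _] /VknP[sI' ? _] /VknP[sJ' ? _].
by apply: eq_noncrossing; rewrite // -?sI -?sI'; congruence.
Qed.

Lemma complex_iso_of_inverse (V : pred (seq nat)) (k1 n1 k2 n2 : nat)
    (f g : seq nat -> seq nat) :
  (forall I, V I -> Vkn k1 n1 I) -> (forall I, V I -> Vkn k2 n2 (f I)) ->
  (forall I, V I -> g (f I) = I) -> (forall J, Vkn k2 n2 J -> V (g J) /\ f (g J) = J) ->
  (forall I J, V I -> V J -> noncrossing I J = noncrossing (f I) (f J)) ->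
  complex_iso V (is_face k1 n1) (Vkn k2 n2) (is_face k2 n2) f.
Proof.
move=> V_Vkn V_fVkn fK gK f_nc; split.
- exact: V_fVkn.
- by move=> I J VI VJ fIJ; rewrite -(fK I VI) -(fK J VJ) fIJ.
- by move=> J /gK[VgJ fgJ]; exists (g J).
move=> F /allP VF; rewrite /is_face !all_map.
have -> : all (Vkn k1 n1) F by apply/allP => I /VF /V_Vkn.
have -> : all (preim f (Vkn k2 n2)) F by apply/allP => I /VF /V_fVkn.
congr andb; apply: eq_in_all => I IF /=; rewrite all_map.
by apply: eq_in_all => J JF /=; apply: f_nc; apply: VF.
Qed.

Lemma Vkn_reflect (k n : nat) (I : seq nat) : Vkn k n I -> Vkn k n (reflect_vec n I).
Proof.
case/VknP => size_I sI rI; apply/VknP; split.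
- by rewrite size_rev size_map.
- rewrite rev_sorted; apply: (homo_sorted_in (P := fun i => 0 < i <= n) (e := ltn)) => //.
  by move=> x y; rewrite !unfold_in /=; lia.
- by rewrite all_rev all_map; apply/allP => x /(allP rI) /=; lia.
Qed.

Lemma reflect_vecK (n : nat) (I : seq nat) :
  all (fun i => 0 < i <= n) I -> reflect_vec n (reflect_vec n I) = I.
Proof.
move=> /allP rI; rewrite /reflect_vec map_rev revK -map_comp.
by apply: map_id_in => x /rI /=; lia.
Qed.

Lemma crosses_reflect (k n : nat) (I J : seq nat) : Vkn k n I -> Vkn k n J ->
  crosses (reflect_vec n I) (reflect_vec n J) <-> crosses J I.
Proof.
move=> VI VJ; have /VknP[size_I _ rI] := VI; have /VknP[size_J _ rJ] := VJ.
rewrite /reflect_vec (crosses_eq (fun y z => crossing_at_rev _ _ y z)).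
apply: (crosses_map_anti (D := fun i => 0 < i <= n));
  rewrite ?(Vkn_uniq VI) ?(Vkn_uniq VJ) //.
- by move=> x y /= ? ? ?; lia.
- by rewrite size_I size_J.
- exact/allP.
- exact/allP.
Qed.

Lemma noncrossing_reflect (k n : nat) (I J : seq nat) : Vkn k n I -> Vkn k n J ->
  noncrossing (reflect_vec n I) (reflect_vec n J) = noncrossing I J.
Proof.
move=> VI VJ; apply: (@noncrossing_Vkn k n k n); rewrite ?Vkn_reflect //.
by rewrite (crosses_reflect VI VJ) (crosses_reflect VJ VI); tauto.
Qed.

Lemma complex_iso_reflect (k n : nat) :
  complex_iso (Vkn k n) (is_face k n) (Vkn k n) (is_face k n) (reflect_vec n).
Proof.
apply: (complex_iso_of_inverse (g := reflect_vec n)) => //.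
- exact: Vkn_reflect.
- by move=> I /VknP[_ _ /reflect_vecK].
- by move=> J VJ; split; [exact: Vkn_reflect | case/VknP: VJ => _ _ /reflect_vecK].
- by move=> I J VI VJ; rewrite (noncrossing_reflect VI VJ).
Qed.

Lemma mem_compl_vec (n : nat) (I : seq nat) (x : nat) :
  (x \in compl_vec n I) = (0 < x <= n) && (x \notin I).
Proof. by rewrite mem_filter mem_iota andbC; congr andb; lia. Qed.

Lemma sorted_compl_vec (n : nat) (I : seq nat) : sorted ltn (compl_vec n I).
Proof. exact/(sorted_filter ltn_trans)/iota_ltn_sorted. Qed.

Lemma count_lt_compl_vec (n : nat) (I : seq nat) (y : nat) :
  uniq I -> all (fun i => 0 < i <= n) I -> y <= n.+1 ->
  count (fun t => t < y) (compl_vec n I) + count (fun t => t < y) I = y.-1.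
Proof.
move=> uI /allP rI yn.
have -> : count (fun t => t < y) I =
          count (fun t => t < y) [seq x <- iota 1 n | ~~ (x \notin I)].
  apply: count_uniq_eq; rewrite ?filter_uniq ?iota_uniq // => x _.
  rewrite mem_filter mem_iota negbK; case xI: (x \in I) => //=.
  by have := rI x xI; lia.
by rewrite /compl_vec -count_filterC count_lt_iota; lia.
Qed.

Lemma Vkn_compl (k n : nat) (I : seq nat) : k <= n -> Vkn k n I ->
  Vkn (n - k) n (compl_vec n I).
Proof.
move=> kn /[dup] /Vkn_uniq uI /VknP[size_I _ rI]; apply/VknP; split.
- have := count_lt_compl_vec uI rI (leqnn n.+1).
  have -> : count (fun t => t < n.+1) (compl_vec n I) = size (compl_vec n I).
    by apply/eqP; rewrite -all_count; apply/allP => x; rewrite mem_compl_vec; lia.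
  have -> : count (fun t => t < n.+1) I = size I.
    by apply/eqP; rewrite -all_count; apply/allP => x /(allP rI); lia.
  lia.
- exact: sorted_compl_vec.
- by apply/allP => x; rewrite mem_compl_vec => /andP[].
Qed.

Lemma compl_vecK (n : nat) (I : seq nat) : sorted ltn I ->
  all (fun i => 0 < i <= n) I -> compl_vec n (compl_vec n I) = I.
Proof.
move=> sI /allP rI.
apply: (irr_sorted_eq ltn_trans ltnn (sorted_compl_vec _ _) sI) => x.
rewrite !mem_compl_vec; case xI: (x \in I) => /=; last by rewrite andbT andbN.
by rewrite andbF (rI x xI).
Qed.

Lemma crossing_at_compl (n : nat) (I J : seq nat) (y z : nat) :
  uniq I -> uniq J -> all (fun i => 0 < i <= n) I -> all (fun i => 0 < i <= n) J ->
  crossing_at (compl_vec n I) (compl_vec n J) y z <-> crossing_at J I y z.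
Proof.
move=> uI uJ rI rJ; rewrite /crossing_at !mem_compl_vec.
split=> [[/and5P[/andP[ry yJ] yI /andP[rz zI] zJ yz] between count_yz] |
         [/and5P[yI yJ zJ zI yz] between count_yz]].
  rewrite ry /= negbK in yI; rewrite rz /= negbK in zJ.
  split; rewrite ?yI ?(negbTE yJ) ?zJ ?(negbTE zI) //.
    move=> t tyz; have := between t tyz; rewrite !mem_compl_vec.
    have -> /= : 0 < t <= n by lia.
    by move/negb_inj ->.
  have := count_lt_compl_vec (y := y) uI rI.
  by have := count_lt_compl_vec (y := y) uJ rJ; lia.
have ry : 0 < y <= n by apply: (allP rI).
have rz : 0 < z <= n by apply: (allP rJ).
split; rewrite ?ry ?rz ?yI ?yJ ?zI ?zJ //.
  by move=> t tyz; rewrite !mem_compl_vec between.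
have := count_lt_compl_vec (y := y) uI rI.
by have := count_lt_compl_vec (y := y) uJ rJ; lia.
Qed.

Lemma noncrossing_compl (k n : nat) (I J : seq nat) : k <= n -> Vkn k n I -> Vkn k n J ->
  noncrossing (compl_vec n I) (compl_vec n J) = noncrossing I J.
Proof.
move=> kn VI VJ; apply: (@noncrossing_Vkn (n - k) n k n); rewrite ?Vkn_compl //.
have /VknP[_ _ rI] := VI; have /VknP[_ _ rJ] := VJ.
have [uI uJ] := (Vkn_uniq VI, Vkn_uniq VJ).
rewrite (crosses_eq (fun y z => crossing_at_compl y z uI uJ rI rJ)).
by rewrite (crosses_eq (fun y z => crossing_at_compl y z uJ uI rJ rI)); tauto.
Qed.

Lemma complex_iso_compl (k n : nat) : k <= n ->
  complex_iso (Vkn k n) (is_face k n) (Vkn (n - k) n) (is_face (n - k) n) (compl_vec n).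
Proof.
move=> kn; apply: (complex_iso_of_inverse (g := compl_vec n)) => //.
- by move=> I; apply: Vkn_compl.
- by move=> I /VknP[_ sI rI]; rewrite compl_vecK.
- move=> J VJ; have := Vkn_compl (leq_subr k n) VJ; rewrite subKn //.
  by case/VknP: VJ => _ sJ rJ; rewrite compl_vecK.
- by move=> I J VI VJ; rewrite (noncrossing_compl kn VI VJ).
Qed.

(** * Symmetric difference *)

Lemma setminus_vec_filter (I J : seq nat) :
  setminus_vec I J = [seq x <- I | ~~ ((x \in I) && (x \in J))].
Proof. by apply: eq_in_filter => x ->. Qed.

Lemma crosses_setminus (I J : seq nat) : uniq I -> uniq J ->
  crosses (setminus_vec I J) (setminus_vec J I) <-> crosses I J.
Proof.
move=> uI uJ; rewrite setminus_vec_filter.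
have -> : setminus_vec J I = [seq x <- J | ~~ ((x \in I) && (x \in J))].
  by apply: eq_in_filter => x ->; rewrite andbT.
by apply: crosses_eq => y z; apply: crossing_at_filter => // x /negPn /andP[-> ->].
Qed.

Lemma size_setminus_vec (I J : seq nat) : uniq I -> uniq J -> size I = size J ->
  size (setminus_vec J I) = size (setminus_vec I J).
Proof.
move=> uI uJ eq_size.
have common : size [seq x <- I | x \in J] = size [seq x <- J | x \in I].
  by apply/perm_size/uniq_perm; rewrite ?filter_uniq // => x; rewrite !mem_filter andbC.
have split_size s t : size s = size [seq x <- s | x \in t] + size (setminus_vec s t).
  by rewrite !size_filter -(count_predC (fun x => x \in t)).
by move: eq_size; rewrite (split_size I J) (split_size J I) common => /addnI ->.
Qed.

Lemma sorted_symdiff_vec (I J : seq nat) : uniq I -> uniq J ->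
  sorted ltn (symdiff_vec I J).
Proof.
move=> uI uJ; rewrite ltn_sorted_uniq_leq sort_uniq (sort_sorted leq_total) andbT.
rewrite cat_uniq /setminus_vec !filter_uniq //= andbT; apply/hasPn => x.
by rewrite !mem_filter => /andP[_ xJ]; rewrite xJ.
Qed.

Section Relabel.
Variable S : seq nat.
Hypothesis S_sorted : sorted ltn S.

Lemma relabel_homo :
  {in (fun x => x \in S) &, {homo (fun x => (index x S).+1) : x y / x < y}}.
Proof.
move=> x y xS yS xy; rewrite ltnS -(sorted_nth_mono S_sorted) ?inE ?index_mem //.
by rewrite !nth_index.
Qed.

Lemma Vkn_relabel (X : seq nat) : sorted ltn X -> {subset X <= S} ->
  Vkn (size X) (size S) (relabel S X).
Proof.
move=> sX XS; apply/VknP; split; first exact: size_map.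
  by apply: (homo_sorted_in relabel_homo) sX; apply/allP.
by rewrite all_map; apply/allP => x /XS xS /=; rewrite index_mem.
Qed.

Lemma crosses_relabel (X Y : seq nat) : {subset X <= S} -> {subset Y <= S} ->
  crosses (relabel S X) (relabel S Y) <-> crosses X Y.
Proof. exact: crosses_map relabel_homo. Qed.

End Relabel.

Lemma noncrossing_relabel_setminus (k n : nat) (I J : seq nat) :
  Vkn k n I -> Vkn k n J ->
  let m := size (setminus_vec I J) in
  let S := symdiff_vec I J in
  [/\ size (setminus_vec J I) = m,
      Vkn m (2 * m) (relabel S (setminus_vec I J)),
      Vkn m (2 * m) (relabel S (setminus_vec J I))
    & noncrossing I J =
      noncrossing (relabel S (setminus_vec I J)) (relabel S (setminus_vec J I))].
Proof.
move=> VI VJ m S; have [uI uJ] := (Vkn_uniq VI, Vkn_uniq VJ).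
have /VknP[size_I sI _] := VI; have /VknP[size_J sJ _] := VJ.
have size_BA : size (setminus_vec J I) = m by apply: size_setminus_vec; congruence.
have sS : sorted ltn S := sorted_symdiff_vec uI uJ.
have size_S : size S = 2 * m by rewrite size_sort size_cat size_BA addnn mul2n.
have AS : {subset setminus_vec I J <= S} by move=> x xA; rewrite mem_sort mem_cat xA.
have BS : {subset setminus_vec J I <= S}.
  by move=> x xB; rewrite mem_sort mem_cat xB orbT.
have sorted_setminus K L : sorted ltn K -> sorted ltn (setminus_vec K L).
  by move=> sK; apply: (sorted_filter ltn_trans).
have VA : Vkn m (2 * m) (relabel S (setminus_vec I J)).
  by rewrite -size_S; apply: Vkn_relabel; rewrite ?sorted_setminus.
have VB : Vkn m (2 * m) (relabel S (setminus_vec J I)).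
  by rewrite -size_S -{1}size_BA; apply: Vkn_relabel; rewrite ?sorted_setminus.
split=> //; apply: (noncrossing_Vkn VI VJ VA VB).
by rewrite !crosses_relabel // !crosses_setminus.
Qed.

(** * Deletion of an element *)

Section Deletion.
Variable b : nat.

Lemma delete_vecE (I : seq nat) : delete_vec b I = map (unbump b) [seq x <- I | x != b].
Proof.
apply/eq_in_map => x; rewrite mem_filter /unbump => /andP[xb _].
by case: (ltngtP x b) xb => //= _ _; rewrite ?subn0 ?subn1.
Qed.

Lemma unbump_homo : {in predC1 b &, {homo unbump b : x y / x < y}}.
Proof. by move=> x y; rewrite !inE /unbump => xb yb xy; lia. Qed.

Lemma mem_delete_vec (I : seq nat) (x : nat) : x != b ->
  (unbump b x \in delete_vec b I) = (x \in I).
Proof.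
move=> xb; rewrite delete_vecE (mem_map_in (D := predC1 b)) ?mem_filter ?xb //.
- exact: can_in_inj unbumpK.
- by move=> y; rewrite mem_filter => /andP[].
Qed.

Lemma sorted_delete_vec (I : seq nat) : sorted ltn I -> sorted ltn (delete_vec b I).
Proof.
move=> sI; rewrite delete_vecE; apply: (homo_sorted_in unbump_homo).
  exact: filter_all.
exact: (sorted_filter ltn_trans).
Qed.

Lemma size_delete_vec (I : seq nat) : uniq I ->
  size (delete_vec b I) + (b \in I) = size I.
Proof.
move=> uI; rewrite size_map size_filter -(count_uniq_mem b uI) addnC.
by rewrite -(count_predC (pred1 b)) addnC.
Qed.

Lemma crosses_delete (I J : seq nat) : uniq I -> uniq J -> (b \in I) = (b \in J) ->
  crosses (delete_vec b I) (delete_vec b J) <-> crosses I J.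
Proof.
move=> uI uJ bIJ; rewrite !delete_vecE (crosses_map (D := predC1 b) unbump_homo);
  try by move=> x; rewrite mem_filter => /andP[].
by apply: crosses_eq => y z; apply: crossing_at_filter => // x /negPn /eqP ->.
Qed.

(* The inverse of [delete_vec b] on the vertices I with [(b \in I) = beta]. *)
Definition undelete_vec (n : nat) (beta : bool) (J : seq nat) : seq nat :=
  [seq x <- iota 1 n | if x == b then beta else unbump b x \in J].

Lemma mem_undelete_vec (n : nat) (beta : bool) (J : seq nat) (x : nat) :
  (x \in undelete_vec n beta J) =
  (0 < x <= n) && (if x == b then beta else unbump b x \in J).
Proof. by rewrite mem_filter mem_iota andbC; congr andb; lia. Qed.

Lemma sorted_undelete_vec (n : nat) (beta : bool) (J : seq nat) :
  sorted ltn (undelete_vec n beta J).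
Proof. exact/(sorted_filter ltn_trans)/iota_ltn_sorted. Qed.

Lemma delete_vecK (n : nat) (I : seq nat) : 0 < b <= n ->
  sorted ltn I -> all (fun i => 0 < i <= n) I ->
  undelete_vec n (b \in I) (delete_vec b I) = I.
Proof.
move=> bn sI /allP rI.
apply: (irr_sorted_eq ltn_trans ltnn (sorted_undelete_vec _ _ _) sI).
move=> x; rewrite mem_undelete_vec; case: eqVneq => [-> | xb].
  by rewrite bn.
by rewrite mem_delete_vec //; case xI: (x \in I); rewrite ?andbF ?rI.
Qed.

Lemma undelete_vecK (n : nat) (beta : bool) (J : seq nat) :
  sorted ltn J -> all (fun i => 0 < i <= n - 1) J ->
  delete_vec b (undelete_vec n beta J) = J.
Proof.
move=> sJ /allP rJ.
apply: (irr_sorted_eq ltn_trans ltnn (sorted_delete_vec (sorted_undelete_vec _ _ _)) sJ).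
move=> y; rewrite delete_vecE; apply/mapP/idP => [[x xs ->] | yJ].
  by move: xs; rewrite mem_filter mem_undelete_vec => /andP[/negbTE-> /andP[]].
exists (bump b y); last by rewrite bumpK.
have bump_neq : (bump b y == b) = false by rewrite eq_sym (negbTE (neq_bump b y)).
rewrite mem_filter mem_undelete_vec bump_neq bumpK yJ andbT /=.
by have := rJ y yJ; rewrite /bump; case: (leqP b y) => /= ?; lia.
Qed.

Lemma Vkn_delete (k n : nat) (I : seq nat) : 0 < b <= n -> Vkn k n I ->
  Vkn (k - (b \in I)) (n - 1) (delete_vec b I).
Proof.
move=> bn /[dup] /Vkn_uniq uI /VknP[size_I sI rI]; apply/VknP; split.
- by have := size_delete_vec uI; lia.
- exact: sorted_delete_vec.
rewrite delete_vecE all_map; apply/allP => x; rewrite mem_filter => /andP[xb xI] /=.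
have := allP rI x xI; rewrite /unbump; case: (ltngtP b x) xb => //= ? _ ?; lia.
Qed.

Lemma Vkn_undelete (k n : nat) (beta : bool) (J : seq nat) : 0 < b <= n ->
  Vkn k (n - 1) J -> Vkn (k + beta) n (undelete_vec n beta J).
Proof.
move=> bn /VknP[size_J sJ rJ].
have in_b : (b \in undelete_vec n beta J) = beta by rewrite mem_undelete_vec eqxx bn.
apply/VknP; split.
- have := size_delete_vec (sorted_uniq ltn_trans ltnn (sorted_undelete_vec n beta J)).
  by rewrite undelete_vecK // in_b size_J => <-.
- exact: sorted_undelete_vec.
- by apply/allP => x; rewrite mem_undelete_vec => /andP[].
Qed.

Lemma noncrossing_delete (k n : nat) (I J : seq nat) : 0 < b <= n ->
  Vkn k n I -> Vkn k n J -> (b \in I) = (b \in J) ->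
  noncrossing (delete_vec b I) (delete_vec b J) = noncrossing I J.
Proof.
move=> bn VI VJ bIJ; have [uI uJ] := (Vkn_uniq VI, Vkn_uniq VJ).
apply: (noncrossing_Vkn (Vkn_delete bn VI) _ VI VJ); first by rewrite bIJ Vkn_delete.
by rewrite !crosses_delete.
Qed.

End Deletion.

(* [V] is given up to [=1] so that both [b \in I] and [b \notin I] fit. *)
Lemma complex_iso_delete (k k' n b : nat) (beta : bool) (V : pred (seq nat)) :
  0 < b <= n -> k' + beta = k -> V =1 [pred I | Vkn k n I && ((b \in I) == beta)] ->
  complex_iso V (is_face k n) (Vkn k' (n - 1)) (is_face k' (n - 1)) (delete_vec b).
Proof.
move=> bn kk' VE.
have VP I : V I -> Vkn k n I /\ (b \in I) = beta by rewrite VE => /andP[? /eqP].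
apply: (complex_iso_of_inverse (g := undelete_vec b n beta)).
- by move=> I /VP[].
- by move=> I /VP[VI bI]; have := Vkn_delete bn VI; rewrite bI -kk' addnK.
- by move=> I /VP[/VknP[_ sI rI] <-]; rewrite delete_vecK.
- move=> J /[dup] VJ /VknP[_ sJ rJ]; rewrite VE /= undelete_vecK //.
  by rewrite -kk' Vkn_undelete // mem_undelete_vec eqxx bn /= eqxx.
- move=> I J /VP[VI bI] /VP[VJ bJ].
  by rewrite (noncrossing_delete bn VI VJ) // bI bJ.
Qed.

(** * Cyclic intervals *)

Lemma not_crosses_iota (c k : nat) (J : seq nat) : uniq J -> size J = k ->
  ~ crosses (iota c k) J /\ ~ crosses J (iota c k).
Proof.
move=> uJ size_J; split=> -[y [z [/and5P[yJ yI zI zJ yz] between count_y]]].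
  by rewrite !mem_iota count_lt_iota in yI zI count_y; lia.
rewrite !mem_iota in yJ zJ; rewrite count_lt_iota in count_y.
have := count_lt_split J yz; have := count_lt_split (iota c k) yz.
rewrite !count_uniq_mem ?iota_uniq // (negbTE yI) mem_iota yJ !count_lt_iota.
have -> : count (fun t => y < t < z) J = count (fun t => y < t < z) (iota c k).
  by apply: count_uniq_eq; rewrite ?iota_uniq // => t /between.
by have := count_lt_mem zI; lia.
Qed.

Lemma noncrossing_iota (c k : nat) (J : seq nat) : sorted ltn J -> size J = k ->
  noncrossing (iota c k) J && noncrossing J (iota c k).
Proof.
move=> sJ size_J.
have [ncl ncr] := not_crosses_iota c (sorted_uniq ltn_trans ltnn sJ) size_J.
by apply/andP; split; apply/noncrossingP; rewrite ?size_iota ?iota_ltn_sorted //; tauto.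
Qed.

Lemma cyc_vec_iota (k n c : nat) : 0 < c -> c + k <= n.+1 -> cyc_vec k n c = iota c k.
Proof.
move=> c_gt0 ck; rewrite /cyc_vec -[iota c k](sorted_sort leq_trans (iota_sorted c k)).
have -> : iota c k = map (addn c) (iota 0 k) by rewrite -iotaDl addn0.
congr sort; apply/eq_in_map => i.
by rewrite mem_iota /= => i_lt_k; rewrite modn_small; lia.
Qed.

Lemma cyc_vec_wrap (k n c : nat) : 0 < c <= n -> k <= n -> n.+1 < c + k ->
  cyc_vec k n c = compl_vec n (iota (c + k - n) (n - k)).
Proof.
move=> c_range kn ck; rewrite /cyc_vec; set p := n.+1 - c; set r := c + k - n.+1.
have -> : [seq ((c + i).-1 %% n).+1 | i <- iota 0 k] = iota c p ++ iota 1 r.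
  rewrite (_ : k = p + r); last by lia.
  rewrite iotaD map_cat; congr cat.
    have -> : iota c p = map (addn c) (iota 0 p) by rewrite -iotaDl addn0.
    apply/eq_in_map => i.
    by rewrite mem_iota /= => i_lt_p; rewrite modn_small; lia.
  have -> : iota p r = map (addn p) (iota 0 r) by rewrite -iotaDl addn0.
  have -> : iota 1 r = map (addn 1) (iota 0 r) by rewrite -iotaDl addn0.
  rewrite -map_comp.
  apply/eq_in_map => i; rewrite mem_iota /= => i_lt_r.
  have -> : (c + (p + i)).-1 = n + i by lia.
  by rewrite modnDl modn_small; lia.
have uniq_cat : uniq (iota c p ++ iota 1 r).
  rewrite cat_uniq !iota_uniq andbT /=; apply/hasPn => x.
  by rewrite !mem_iota; lia.
apply: (irr_sorted_eq ltn_trans ltnn _ (sorted_compl_vec _ _)) => [|x].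
  by rewrite ltn_sorted_uniq_leq sort_uniq uniq_cat (sort_sorted leq_total).
by rewrite mem_sort mem_cat mem_compl_vec !mem_iota; lia.
Qed.

Lemma Vkn_iota (c k n : nat) : 0 < c -> c + k <= n.+1 -> Vkn k n (iota c k).
Proof.
move=> c_gt0 ck; apply/VknP; split; rewrite ?size_iota ?iota_ltn_sorted //.
by apply/allP => x; rewrite mem_iota; lia.
Qed.

Lemma Vkn_cyc_vec (k n c : nat) : 0 < c <= n -> k <= n -> Vkn k n (cyc_vec k n c).
Proof.
move=> c_range kn; case: (leqP (c + k) n.+1) => ck.
  by rewrite cyc_vec_iota ?Vkn_iota //; lia.
rewrite cyc_vec_wrap // -{1}(subKn kn); apply: Vkn_compl; first exact: leq_subr.
by apply: Vkn_iota; lia.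
Qed.

Lemma noncrossing_cyc_vec (k n c : nat) (I : seq nat) : 0 < c <= n -> k <= n ->
  Vkn k n I -> noncrossing (cyc_vec k n c) I && noncrossing I (cyc_vec k n c).
Proof.
move=> c_range kn /[dup] VI /VknP[size_I sI rI].
case: (leqP (c + k) n.+1) => ck; first by rewrite cyc_vec_iota ?noncrossing_iota //; lia.
have V_iota : Vkn (n - k) n (iota (c + k - n) (n - k)) by apply: Vkn_iota; lia.
have VcI := Vkn_compl kn VI; have /VknP[size_cI scI _] := VcI.
rewrite cyc_vec_wrap // -(compl_vecK sI rI).
rewrite (noncrossing_compl (leq_subr k n) V_iota VcI).
by rewrite (noncrossing_compl (leq_subr k n) VcI V_iota) noncrossing_iota.
Qed.

Lemma mem_max_face (k n : nat) (C : seq nat) (F : seq (seq nat)) : Vkn k n C ->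
  (forall I, Vkn k n I -> noncrossing C I && noncrossing I C) ->
  is_max_face k n F -> C \in F.
Proof.
move=> VC ncC [/andP[/allP VF /allP ncF] maxF]; apply: (maxF (C :: F)); last first.
- exact: mem_head.
- by move=> I IF; rewrite inE IF orbT.
apply/andP; split; first by apply/allP => I; rewrite inE => /predU1P[-> | /VF].
apply/allP => I; rewrite inE => /predU1P[-> | IF]; apply/allP => J; rewrite inE.
  by case/predU1P => [-> | /VF /ncC /andP[]//]; case/andP: (ncC C VC).
case/predU1P => [-> | JF]; first by case/andP: (ncC I (VF I IF)).
exact: (allP (ncF I IF)).
Qed.

Theorem proposition1p5 (k n : nat) (hk1 : 1 <= k) (hkn : k <= n - 1) :
  (* (i) *)
  complex_iso (Vkn k n) (is_face k n) (Vkn k n) (is_face k n) (reflect_vec n) /\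
  (* (ii) *)
  (complex_iso (Vkn k n) (is_face k n) (Vkn (n - k) n) (is_face (n - k) n)
               (compl_vec n) /\
   forall I J, Vkn k n I -> Vkn k n J ->
     noncrossing I J = noncrossing (compl_vec n I) (compl_vec n J)) /\
  (* (iii) *)
  (forall I J, Vkn k n I -> Vkn k n J -> I <> J ->
     let m := size (setminus_vec I J) in
     let S := symdiff_vec I J in
     [/\ size (setminus_vec J I) = m,
         Vkn m (2 * m) (relabel S (setminus_vec I J)),
         Vkn m (2 * m) (relabel S (setminus_vec J I))
       & noncrossing I J =
         noncrossing (relabel S (setminus_vec I J))
                     (relabel S (setminus_vec J I))]) /\
  (* (iv) *)
  (forall b, 1 <= b <= n ->
     complex_iso [pred I | Vkn k n I && (b \in I)] (is_face k n)
                 (Vkn (k - 1) (n - 1)) (is_face (k - 1) (n - 1)) (delete_vec b) /\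
     complex_iso [pred I | Vkn k n I && (b \notin I)] (is_face k n)
                 (Vkn k (n - 1)) (is_face k (n - 1)) (delete_vec b)) /\
  (* (v) *)
  (forall c, 1 <= c <= n ->
     Vkn k n (cyc_vec k n c) /\
     (forall I, Vkn k n I -> noncrossing (cyc_vec k n c) I) /\
     (forall F, is_max_face k n F -> cyc_vec k n c \in F)).
Proof.
have kn : k <= n by lia.
split; first exact: complex_iso_reflect.
split.
  split; first exact: complex_iso_compl.
  by move=> I J VI VJ; rewrite (noncrossing_compl kn VI VJ).
split; first by move=> I J VI VJ _; exact: (noncrossing_relabel_setminus VI VJ).
split.
  move=> b b_range; split.
    by apply: (complex_iso_delete (beta := true)) => // [|I]; [lia | rewrite /= eqb_id].
  apply: (complex_iso_delete (beta := false)) => // [|I]; first by rewrite addn0.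
  by rewrite /= eqbF_neg.
move=> c c_range; have VC := Vkn_cyc_vec c_range kn.
have ncC I : Vkn k n I -> noncrossing (cyc_vec k n c) I && noncrossing I (cyc_vec k n c).
  exact: noncrossing_cyc_vec.
split=> //; split; first by move=> I /ncC /andP[].
by move=> F; apply: mem_max_face.
Qed.
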